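(* Let $S$ be a semigroup with a subsemigroup $T$ such that $S\setminus T$ is an ideal of $S$. (1) If $S$ is right ideal Howson then so is $T$. (2) If moreover $S\setminus T$ is finite, then $S$ is right ideal Howson if and only if $T$ is right ideal Howson.
   Context: A semigroup $S$ is right ideal Howson if the intersection of any two finitely generated right ideals of $S$ is finitely generated, where a right ideal $I$ is finitely generated if $I=XS^1$ for a finite $X\subseteq I$ ($S^1$ being $S$ if $S$ is a monoid and otherwise $S$ with an identity adjoined). *)

(* plain Rocq.  A semigroup is a carrier type S with an
   associative binary operation mul.  A subsemigroup is a predicate A on S
   closed under mul; S itself is the subsemigroup (fun _ => True). *)
From Stdlib Require Import List.

Definition associative {S : Type} (mul : S -> S -> S) : Prop :=
  forall x y z, mul x (mul y z) = mul (mul x y) z.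

Definition subsemigroup {S : Type} (mul : S -> S -> S) (A : S -> Prop) : Prop :=
  forall x y, A x -> A y -> A (mul x y).

Definition is_ideal {S : Type} (mul : S -> S -> S) (I : S -> Prop) : Prop :=
  forall s u, I u -> I (mul s u) /\ I (mul u s).

(* I is a finitely generated right ideal of the semigroup with underlying set A:
   I = X A^1 = X ∪ X A for a finite X ⊆ I (X ⊆ A is implied). *)
Definition fg_right_ideal {S : Type} (mul : S -> S -> S) (A : S -> Prop)
    (I : S -> Prop) : Prop :=
  exists X : list S,
    (forall x, In x X -> A x) /\
    (forall y, I y <-> exists x, In x X /\ (y = x \/ exists a, A a /\ y = mul x a)).

Definition right_ideal_Howson {S : Type} (mul : S -> S -> S) (A : S -> Prop) : Prop :=
  forall I J : S -> Prop,
    fg_right_ideal mul A I -> fg_right_ideal mul A J ->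
    fg_right_ideal mul A (fun x => I x /\ J x).

Definition finite_set {S : Type} (P : S -> Prop) : Prop :=
  exists l : list S, forall x, P x -> In x l.

(* Since the complement of [T] is an ideal, a product [x a] can lie in [T] only if
   both [x] and [a] do.  Hence, for a right ideal [X S^1] of [S], its trace on [T] is
   the right ideal of [T] generated by the members of [X] lying in [T]; and a right
   ideal [X T^1] of [T] with [X] in [T] is the trace of [X S^1].  Intersecting traces
   transfers the Howson property from [S] to [T].  Conversely, if [S \ T] is finite,
   an intersection [I ∩ J] of finitely generated right ideals of [S] is generated by
   generators of the intersection of the traces on [T], together with the finitely
   many elements of [I ∩ J] outside [T]. *)
From Stdlib Require Import List Classical.

Lemma list_sep {S : Type} (P : S -> Prop) (l : list S) :
  exists l', forall x, In x l' <-> In x l /\ P x.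
Proof.
  induction l as [|a l [l' Hl']].
  - exists nil; simpl; tauto.
  - destruct (classic (P a)) as [Pa|nPa].
    + exists (a :: l'); intros x; simpl; rewrite Hl'.
      split; [intros [<-|?]|intros [[<-|?] ?]]; tauto.
    + exists l'; intros x; simpl; rewrite Hl'.
      split; [tauto|intros [[<-|?] ?]; tauto].
Qed.

Section RightIdealGen.

Context {S : Type} (mul : S -> S -> S).

Definition right_ideal_gen (A : S -> Prop) (X : list S) (y : S) : Prop :=
  exists x, In x X /\ (y = x \/ exists a, A a /\ y = mul x a).

Lemma right_ideal_gen_self A X x : In x X -> right_ideal_gen A X x.
Proof. intros Hx; exists x; auto. Qed.

Lemma right_ideal_gen_mono (A B : S -> Prop) X X' y :
  (forall a, A a -> B a) -> (forall x, In x X -> In x X') ->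
  right_ideal_gen A X y -> right_ideal_gen B X' y.
Proof.
  intros HAB HX [x [Hx [E|[a [Aa E]]]]]; exists x; split; auto.
  right; exists a; auto.
Qed.

Lemma right_ideal_gen_least (A P : S -> Prop) X y :
  (forall x, In x X -> P x) -> (forall x a, P x -> A a -> P (mul x a)) ->
  right_ideal_gen A X y -> P y.
Proof. intros HX HP [x [Hx [E|[a [Aa E]]]]]; subst; auto. Qed.

Lemma right_ideal_gen_mulr A X z a :
  associative mul -> subsemigroup mul A ->
  right_ideal_gen A X z -> A a -> right_ideal_gen A X (mul z a).
Proof.
  intros Hassoc HA [x [Hx [E|[b [Ab E]]]]] Aa; exists x; split; auto; right; subst.
  - exists a; auto.
  - exists (mul b a); split; [apply HA; auto|symmetry; apply Hassoc].
Qed.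

Lemma fg_right_ideal_gen A X :
  (forall x, In x X -> A x) -> fg_right_ideal mul A (right_ideal_gen A X).
Proof. intros HX; exists X; split; [exact HX|reflexivity]. Qed.

Lemma right_ideal_Howson_gen A :
  (forall X Y, (forall x, In x X -> A x) -> (forall x, In x Y -> A x) ->
     fg_right_ideal mul A (fun y => right_ideal_gen A X y /\ right_ideal_gen A Y y)) ->
  right_ideal_Howson mul A.
Proof.
  intros HXY I J [X [HX HI]] [Y [HY HJ]].
  destruct (HXY X Y HX HY) as [Z [HZ HZe]].
  exists Z; split; [exact HZ|]; intros y.
  rewrite HI, HJ; apply HZe.
Qed.

End RightIdealGen.

Section IdealComplement.

Variables (S : Type) (mul : S -> S -> S) (T : S -> Prop).
Hypothesis T_sub : subsemigroup mul T.
Hypothesis compl_ideal : is_ideal mul (fun x => ~ T x).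

Let full := fun _ : S => True.

Lemma right_ideal_gen_trace Z Z' y :
  (forall x, In x Z' <-> In x Z /\ T x) ->
  right_ideal_gen mul T Z' y <-> right_ideal_gen mul full Z y /\ T y.
Proof.
  intros HZ'; split.
  - intros G; split.
    + apply (right_ideal_gen_mono mul T full Z' Z); auto.
      * intros; exact I.
      * intros x Hx; apply HZ'; exact Hx.
    + apply (right_ideal_gen_least mul T T Z'); auto.
      intros x Hx; apply HZ'; exact Hx.
  - intros [[z [Hz [E|[a [_ E]]]]] Ty]; subst.
    + apply right_ideal_gen_self, HZ'; auto.
    + assert (Tz : T z) by (apply NNPP; intros nTz; exact (proj2 (compl_ideal a z nTz) Ty)).
      assert (Ta : T a) by (apply NNPP; intros nTa; exact (proj1 (compl_ideal z a nTa) Ty)).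
      exists z; split; [apply HZ'; auto|right; exists a; auto].
Qed.

Lemma right_ideal_Howson_sub :
  right_ideal_Howson mul full -> right_ideal_Howson mul T.
Proof.
  intros HS; apply right_ideal_Howson_gen; intros X Y HX HY.
  destruct (HS _ _ (fg_right_ideal_gen mul full X (fun _ _ => I))
                   (fg_right_ideal_gen mul full Y (fun _ _ => I))) as [Z [_ HZ]].
  change (forall y, right_ideal_gen mul full X y /\ right_ideal_gen mul full Y y <->
                    right_ideal_gen mul full Z y) in HZ.
  destruct (list_sep T Z) as [Z' HZ'].
  exists Z'; split; [intros x Hx; apply HZ'; exact Hx|]; intros y.
  assert (HXT : forall x, In x X <-> In x X /\ T x) by firstorder.
  assert (HYT : forall x, In x Y <-> In x Y /\ T x) by firstorder.
  rewrite (right_ideal_gen_trace _ _ y HXT), (right_ideal_gen_trace _ _ y HYT),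
          (right_ideal_gen_trace _ _ y HZ'), <- HZ.
  tauto.
Qed.

Hypothesis S_assoc : associative mul.

Lemma right_ideal_Howson_ext :
  finite_set (fun x => ~ T x) ->
  right_ideal_Howson mul T -> right_ideal_Howson mul full.
Proof.
  intros [L HL] HT; apply right_ideal_Howson_gen; intros X Y _ _.
  set (IJ := fun y => right_ideal_gen mul full X y /\ right_ideal_gen mul full Y y).
  destruct (list_sep T X) as [XT HXT]; destruct (list_sep T Y) as [YT HYT].
  destruct (HT _ _ (fg_right_ideal_gen mul T XT (fun x Hx => proj2 (proj1 (HXT x) Hx)))
                   (fg_right_ideal_gen mul T YT (fun x Hx => proj2 (proj1 (HYT x) Hx))))
    as [W [_ HW]].
  change (forall y, right_ideal_gen mul T XT y /\ right_ideal_gen mul T YT y <->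
                    right_ideal_gen mul T W y) in HW.
  assert (HWIJ : forall y, right_ideal_gen mul T W y <-> IJ y /\ T y).
  { intros y; rewrite <- HW, (right_ideal_gen_trace _ _ y HXT),
      (right_ideal_gen_trace _ _ y HYT); unfold IJ; tauto. }
  destruct (list_sep IJ L) as [F HF].
  exists (W ++ F); split; [intros; exact I|]; intros y; split.
  - intros IJy; destruct (classic (T y)) as [Ty|nTy].
    + apply (right_ideal_gen_mono mul T _ W); [intros; exact I|intros; apply in_or_app; auto|].
      apply HWIJ; auto.
    + apply right_ideal_gen_self, in_or_app; right; apply HF; auto.
  - apply (right_ideal_gen_least mul full IJ).
    + intros x Hx; apply in_app_or in Hx as [Hx|Hx]; [|apply HF; exact Hx].
      apply HWIJ, right_ideal_gen_self; exact Hx.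
    + intros x a [GX GY] Fa; split;
        apply right_ideal_gen_mulr; try assumption; intros ? ? ? ?; exact I.
Qed.

End IdealComplement.

Theorem mainTheorem18 (S : Type) (mul : S -> S -> S) (T : S -> Prop) :
  associative mul ->
  subsemigroup mul T ->
  is_ideal mul (fun x => ~ T x) ->
  (right_ideal_Howson mul (fun _ => True) -> right_ideal_Howson mul T) /\
  (finite_set (fun x => ~ T x) ->
     (right_ideal_Howson mul (fun _ => True) <-> right_ideal_Howson mul T)).
Proof.
  intros Hassoc HT Hcompl; split.
  - exact (right_ideal_Howson_sub S mul T HT Hcompl).
  - intros Hfin; split.
    + exact (right_ideal_Howson_sub S mul T HT Hcompl).
    + exact (right_ideal_Howson_ext S mul T HT Hcompl Hassoc Hfin).
Qed.
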